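(* Let $V$ be a finite nonempty set and $f:\{0,1\}^V\to\{0,1\}^V$. Suppose that for every integer $k$ with $1\leq k\leq |V|$, there are at most $2^k-1$ points $x\in\{0,1\}^V$ such that the local interaction graph $Gf(x)$ has a cycle of length at most $k$. Then $f$ has a unique fixed point.
   Context: For $x\in\{0,1\}^V$, $j\in V$, $\alpha\in\{0,1\}$, let $x^{j\alpha}$ be the point equal to $x$ except that its $j$-component is $\alpha$. The local interaction graph $Gf(x)$ is the signed digraph with vertex set $V$ having, for $i,j\in V$, a positive arc from $j$ to $i$ if $f_i(x^{j1})-f_i(x^{j0})=1$ and a negative arc from $j$ to $i$ if $f_i(x^{j1})-f_i(x^{j0})=-1$ (and no arc from $j$ to $i$ otherwise); loops are allowed. A cycle is a subgraph whose underlying unsigned digraph is a directed cycle (a loop is a cycle of length 1); its length is its number of arcs. *)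

From mathcomp Require Import all_boot all_order all_algebra.
Import GRing.Theory.
Local Open Scope ring_scope.
Set Implicit Arguments. Unset Strict Implicit. Unset Printing Implicit Defensive.

Definition point (V : finType) := {ffun V -> bool}.

Definition setc (V : finType) (x : point V) (j : V) (a : bool) : point V :=
  [ffun i => if i == j then a else x i].

Definition ldiff (V : finType) (f : point V -> point V) (x : point V) (j i : V) : int :=
  (f (setc x j true) i : nat)%:Z - (f (setc x j false) i : nat)%:Z.

(* Positive / negative arcs j -> i of the local interaction graph Gf(x). *)
Definition pos_arc (V : finType) (f : point V -> point V) (x : point V) (j i : V) : bool :=
  ldiff f x j i == 1%:Z.
Definition neg_arc (V : finType) (f : point V -> point V) (x : point V) (j i : V) : bool :=
  ldiff f x j i == (-1)%R.

Definition arc (V : finType) (f : point V -> point V) (x : point V) : rel V :=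
  fun j i => pos_arc f x j i || neg_arc f x j i.

(* Gf(x) has a cycle of length l: a directed cycle on l distinct vertices
   v_0 -> v_1 -> ... -> v_{l-1} -> v_0 (l = 1 is a loop). *)
Definition has_cycle_len (V : finType) (f : point V -> point V) (x : point V) (l : nat) : Prop :=
  exists c : seq V, [/\ size c = l, (0 < l)%N, uniq c & cycle (arc f x) c].

Definition has_cycle_le (V : finType) (f : point V -> point V) (x : point V) (k : nat) : Prop :=
  exists l : nat, (l <= k)%N /\ has_cycle_len f x l.

(* For [I] a set of coordinates and [z] a point, the subcube [subcube I z]
   consists of the points agreeing with [z] outside [I]; [npat I z t] counts
   its points [x] with [x + f x = t] on [I] (sum mod 2), so the fixed points
   of [f] are counted by [npat setT z 0].  Splitting the subcube along
   [j \in I] gives [npat I z t + npat I z t^j] as a sum of two counts over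
   [I :\ j].  If [npat] is not identically 1, choose [I] minimal on which it
   is not; then all these flip sums equal 2.  Were some [j \in I] to influence
   no [f_i], [i \in I], at some [x] of the subcube, then [x^{j1}] and [x^{j0}]
   would realise a pattern and its [j]-flip, forcing [npat I z] to be
   constantly 1.  So at each of the [2^|I|] points of the subcube every vertex
   of [I] has an out-arc into [I] in [Gf(x)], hence [Gf(x)] has a cycle of
   length at most [|I|], contradicting the hypothesis for [k = |I|]. *)

From Pilot Require Import Defs.
From mathcomp Require Import all_boot zify.
Set Implicit Arguments. Unset Strict Implicit. Unset Printing Implicit Defensive.

Section PatternCount.
Variables (V : finType) (f : point V -> point V).

Definition subcube (I : {set V}) (z x : point V) : bool :=
  [forall i, (i \notin I) ==> (x i == z i)].

Definition agree_on (I : {set V}) (u t : point V) : bool :=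
  [forall i, (i \in I) ==> (u i == t i)].

Definition fdiff (x : point V) : point V := [ffun i => x i != f x i].

Definition npat (I : {set V}) (z t : point V) : nat :=
  #|[set x | subcube I z x & agree_on I (fdiff x) t]|.

Definition flip (u : point V) (j : V) : point V := setc u j (~~ u j).

Lemma setc_id (u : point V) j : setc u j (u j) = u.
Proof. by apply/ffunP => i; rewrite ffunE; case: eqP => // ->. Qed.

Lemma flipK (u : point V) j : flip (flip u j) j = u.
Proof.
by apply/ffunP => i; rewrite !ffunE; case: (i =P j) => [-> |]; rewrite ?eqxx ?negbK.
Qed.

Lemma subcube_setc (I : {set V}) z j x b : j \in I ->
  subcube I z x && (x j == b) = subcube (I :\ j) (setc z j b) x.
Proof.
move=> jI; apply/andP/forallP => [[/forallP H /eqP xj] i | H].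
  rewrite !inE ffunE negb_and negbK; case: eqP => [-> |_ /=]; first by rewrite /= xj.
  exact: (H i).
split; last by move: (implyP (H j)); rewrite !inE eqxx ffunE eqxx /= => /(_ isT).
apply/forallP => i; apply/implyP => iI; move: (implyP (H i)).
by rewrite !inE ffunE; case: eqP iI => [-> /negP //|_ iI /=]; apply; rewrite iI.
Qed.

Lemma card_subcube_split (I : {set V}) z j (Q : pred (point V)) : j \in I ->
  #|[set x | subcube I z x & Q x]| =
  #|[set x | subcube (I :\ j) (setc z j false) x & Q x]| +
  #|[set x | subcube (I :\ j) (setc z j true) x & Q x]|.
Proof.
move=> jI; rewrite -(cardID [set x : point V | x j]) addnC.
congr (_ + _); apply: eq_card => x; rewrite !inE -!subcube_setc //;
by case: (x j); rewrite /= ?andbT ?andbF.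
Qed.

Lemma card_subcube (I : {set V}) z : #|[set x | subcube I z x]| = 2 ^ #|I|.
Proof.
have setIdT (P : pred (point V)) : [set x | P x & true] = [set x | P x].
  by apply/setP => x; rewrite !inE andbT.
move hI: #|I| => n; elim: n I z hI => [|n IH] I z hI.
  move/eqP: hI; rewrite cards_eq0 => /eqP ->; rewrite expn0 -(cards1 z).
  apply: eq_card => x; rewrite !inE; apply/forallP/eqP => [H|-> i]; last first.
    by rewrite eqxx implybT.
  by apply/ffunP => i; apply/eqP; apply: (implyP (H i)); rewrite inE.
have [j jI] : exists j, j \in I by apply/set0Pn; rewrite -card_gt0 hI.
have hIj : #|I :\ j| = n by move: hI; rewrite (cardsD1 j) jI add1n => -[].
by rewrite -setIdT (card_subcube_split _ predT jI) !setIdT !IH // expnS mul2n addnn.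
Qed.

Lemma agree_on_setc (I : {set V}) u t j b : j \in I ->
  agree_on I u (setc t j b) = agree_on (I :\ j) u t && (u j == b).
Proof.
move=> jI; apply/forallP/andP => [H | [/forallP H /eqP uj] i].
  split; last by move: (implyP (H j)); rewrite jI ffunE eqxx; apply.
  apply/forallP => i; apply/implyP; rewrite !inE => /andP[nij iI].
  by move: (implyP (H i)); rewrite iI ffunE (negbTE nij); apply.
rewrite ffunE; case: (i =P j) => [-> |/eqP nij]; first by rewrite uj eqxx implybT.
by apply/implyP => iI; apply: (implyP (H i)); rewrite !inE nij iI.
Qed.

Lemma npat_set0 z t : npat set0 z t = 1.
Proof.
rewrite /npat -(cards1 z); apply: eq_card => x; rewrite !inE.
have -> : agree_on set0 (fdiff x) t by apply/forallP => i; rewrite inE.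
rewrite andbT; apply/forallP/eqP => [H|-> i]; last by rewrite eqxx implybT.
by apply/ffunP => i; apply/eqP; apply: (implyP (H i)); rewrite inE.
Qed.

(* Both sides count the points of [subcube I z] whose [fdiff] agrees with [t]
   on [I :\ j], split once by the value of [fdiff] at [j], once by [x j]. *)
Lemma npat_flip (I : {set V}) z t j : j \in I ->
  npat I z t + npat I z (flip t j) =
  npat (I :\ j) (setc z j false) t + npat (I :\ j) (setc z j true) t.
Proof.
move=> jI; rewrite /npat -card_subcube_split //.
rewrite -(cardID [set x | fdiff x j == t j]
                  [set x | subcube I z x & agree_on (I :\ j) (fdiff x) t]).
congr (_ + _); apply: eq_card => x; rewrite !inE.
  by rewrite -{1}(setc_id t j) agree_on_setc // andbA.
rewrite agree_on_setc //.
by case: (fdiff x j) (t j) (subcube I z x) (agree_on _ _ _) => -[] [] [].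
Qed.

Lemma npat_agree_on (I : {set V}) z u t : agree_on I u t -> npat I z u = npat I z t.
Proof.
move=> /forallP H; apply: eq_card => x; rewrite !inE; congr (_ && _).
apply/forallP/forallP => H' i; apply/implyP => iI;
by move: (implyP (H i) iI) (implyP (H' i) iI) => /eqP -> /eqP ->.
Qed.

Section FlipSum.
Variables (I : {set V}) (z : point V).
Hypothesis flip_sum2 : forall u j, j \in I -> npat I z u + npat I z (flip u j) = 2.

Lemma npat_const t : npat I z t = 1 -> forall u, npat I z u = 1.
Proof.
move=> Ht u; move hn: #|[set i in I | u i != t i]| => n.
elim: n u hn => [|n IH] u hn.
  rewrite -Ht; apply: npat_agree_on; apply/forallP => i; apply/implyP => iI.
  move/eqP: hn; rewrite cards_eq0 => /eqP /setP /(_ i).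
  by rewrite !inE iI /= => /negbFE.
have [i] : exists i, i \in [set i in I | u i != t i].
  by apply/set0Pn; rewrite -card_gt0 hn.
rewrite inE => /andP[iI uti].
have hflip : #|[set k in I | flip u i k != t k]| = n.
  have -> : [set k in I | flip u i k != t k] = [set k in I | u k != t k] :\ i.
    apply/setP => k; rewrite !inE ffunE; case: (k =P i) => [-> | _] //=.
    by rewrite iI; move: uti; case: (u i) (t i) => -[].
  by move: hn; rewrite (cardsD1 i) inE iI uti add1n => -[].
by have := flip_sum2 (flip u i) iI; rewrite IH // flipK => -[].
Qed.

Lemma sensitive_of_npat_neq1 t0 x j : npat I z t0 != 1 ->
  subcube I z x -> j \in I ->
  exists2 i, i \in I & f (setc x j true) i != f (setc x j false) i.
Proof.
move=> Nt0 xC jI.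
have [/existsP [i /andP[iI ne]] | /existsPn insens] :=
  boolP [exists i, (i \in I) && (f (setc x j true) i != f (setc x j false) i)].
  by exists i.
exfalso; move/negP: Nt0; apply.
set x1 := setc x j true; set x0 := setc x j false.
have feq i : i \in I -> f x1 i = f x0 i.
  by move=> iI; move: (insens i); rewrite iI /= negbK => /eqP.
have setcC b : subcube I z (setc x j b).
  move: xC => /forallP xC; apply/forallP => i; apply/implyP => iI.
  rewrite ffunE; case: (i =P j) => [ei|_]; first by move: iI; rewrite ei jI.
  exact: (implyP (xC i)).
pose t := fdiff x1.
have pos1 : 0 < npat I z t.
  apply/card_gt0P; exists x1; rewrite inE setcC.
  by apply/forallP => i; rewrite eqxx implybT.
have pos0 : 0 < npat I z (flip t j).
  apply/card_gt0P; exists x0; rewrite inE setcC; apply/forallP => i.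
  apply/implyP => iI; rewrite /t !ffunE -(feq i iI).
  by case: (i =P j) => [-> | _]; rewrite eqxx //; case: (f x1 j).
have Nt : npat I z t = 1 by move: (flip_sum2 t jI) pos1 pos0; lia.
by rewrite (npat_const Nt).
Qed.

End FlipSum.

Lemma exists_minimal_npat_neq1 I0 z0 t0 : npat I0 z0 t0 != 1 ->
  exists I z t, npat I z t != 1 /\
    forall u j, j \in I -> npat I z u + npat I z (flip u j) = 2.
Proof.
move=> Nt0.
pose bad (I : {set V}) := [exists z, exists t, npat I z t != 1].
have badI0 : bad I0 by apply/existsP; exists z0; apply/existsP; exists t0.
case: (arg_minnP (fun I : {set V} => #|I|) badI0) => I /existsP[z /existsP[t Nt]] Imin.
have npat_small (J : {set V}) z' t' : #|J| < #|I| -> npat J z' t' = 1.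
  move=> ltJ; apply/eqP; apply: contraTT ltJ => NJ; rewrite -leqNgt; apply: Imin.
  by apply/existsP; exists z'; apply/existsP; exists t'.
exists I, z, t; split=> // u j jI.
by rewrite npat_flip // !npat_small // (cardsD1 j I) jI.
Qed.

Lemma unique_fixpoint_of_npat z :
  npat setT z [ffun=> false] = 1 -> exists! x : point V, f x = x.
Proof.
move=> /eqP /cards1P [x hx].
have fixE y : (y \in [set x | subcube setT z x & agree_on setT (fdiff x) [ffun=> false]])
              = (f y == y).
  rewrite !inE; have -> /= : subcube setT z y.
    by apply/forallP => i; rewrite inE.
  apply/forallP/eqP => [Hy | fy i]; last by rewrite !ffunE fy eqxx implybT.
  apply/ffunP => i; move: (implyP (Hy i)); rewrite inE !ffunE => /(_ isT) /eqP.
  by case: (y i); case: (f y i).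
exists x; split; first by apply/eqP; rewrite -fixE hx set11.
by move=> y /eqP; rewrite -fixE hx inE => /eqP ->.
Qed.

End PatternCount.

Lemma cycle_of_out_arcs (T : finType) (e : rel T) (A : {set T}) (a : T) :
  a \in A -> (forall j, j \in A -> exists2 i, i \in A & e j i) ->
  exists c : seq T, [/\ 0 < size c, size c <= #|A|, uniq c & cycle e c].
Proof.
move=> aA out.
pose g j := odflt j [pick i in A | e j i].
have gA j : j \in A -> g j \in A /\ e j (g j).
  move=> jA; rewrite /g; case: pickP => [i /andP[iA eji] | H] //=.
  by have [i iA eji] := out j jA; move: (H i); rewrite iA eji.
have iterA n x : x \in A -> iter n g x \in A.
  by move=> xA; elim: n => //= n IH; case: (gA _ IH).
have connectA x y : x \in A -> fconnect g x y -> y \in A.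
  by move=> xA /iter_findex <-; apply: iterA.
have /trajectP[i lti loop_a] := looping_order g a.
set y := iter i g a.
have yA : y \in A by apply: iterA.
have cyc : fcycle g (orbit g y).
  apply/(orbitPcycle 0 3); exists (order g a - i).-1.
  by rewrite prednK ?subn_gt0 // /y -iterD subnK ?(ltnW lti).
exists (orbit g y); split.
- by rewrite size_orbit order_gt0.
- have /card_uniqP <- := orbit_uniq g y; apply: subset_leq_card.
  by apply/subsetP => w; rewrite -fconnect_orbit; apply: connectA.
- exact: orbit_uniq.
- apply: (sub_in_cycle (P := mem A) (e := frel g)); last exact: cyc.
  + by move=> u v uA _ /eqP <-; case: (gA _ uA).
  + by apply/allP => w; rewrite -fconnect_orbit; apply: connectA.
Qed.

Lemma has_cycle_le_of_sensitive (V : finType) (f : point V -> point V) x (I : {set V}) :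
  I != set0 ->
  (forall j, j \in I -> exists2 i, i \in I & f (setc x j true) i != f (setc x j false) i) ->
  has_cycle_le f x #|I|.
Proof.
move=> /set0Pn[j0 j0I] sens.
have [c [c_gt0 c_le uniq_c cyc]] : exists c : seq V,
    [/\ 0 < size c, size c <= #|I|, uniq c & cycle (Defs.arc f x) c].
  apply: (cycle_of_out_arcs j0I) => j /sens[i iI ne]; exists i => //.
  move: ne; rewrite /Defs.arc /pos_arc /neg_arc /ldiff.
  by case: (f (setc x j true) i); case: (f (setc x j false) i).
by exists (size c); split => //; exists c.
Qed.

Theorem corollary3 (V : finType) (f : point V -> point V) :
  0 < #|V| ->
  (forall k : nat, 1 <= k <= #|V| ->
     forall s : seq (point V), uniq s ->
       (forall x, x \in s -> has_cycle_le f x k) ->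
       size s <= 2 ^ k - 1) ->
  exists! x : point V, f x = x.
Proof.
move=> _ few_cycles; pose z0 : point V := [ffun=> false].
have [/eqP Nfix|Nfix] := boolP (npat f setT z0 z0 == 1).
  exact: unique_fixpoint_of_npat Nfix.
have [I [z [t [Nt flip_sum2]]]] := exists_minimal_npat_neq1 Nfix.
have I0 : I != set0 by apply: contraNneq Nt => ->; rewrite npat_set0.
have cycles x : x \in enum [set x | subcube I z x] -> has_cycle_le f x #|I|.
  rewrite mem_enum inE => xC; apply: has_cycle_le_of_sensitive => // j.
  exact: (sensitive_of_npat_neq1 flip_sum2 Nt xC).
have := few_cycles #|I| _ _ (enum_uniq _) cycles.
rewrite -cardE card_subcube card_gt0 I0 max_card => /(_ isT).
by have := expn_gt0 2 #|I|; lia.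
Qed.
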